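(* Let $A=\{z\in\mathbb{C}:\operatorname{Re}z>0\}$. Let $Q_0$ be a function holomorphic in $A$ and $Q_1$ a polynomial in one complex variable. If $Q_0(w)+vQ_1(w)\ne0$ for all $v,w\in A$, then either $S(z)=Q_0(z)+Q_1'(z)\ne0$ for all $z\in A$, or $S\equiv0$ on $A$. *)

From Stdlib Require Import Reals.
From Coquelicot Require Export Coquelicot.
Open Scope R_scope.

Definition right_half_plane (z : C) : Prop := 0 < Re z.

Definition C_differentiable (f : C -> C) (z : C) : Prop :=
  @ex_derive C_AbsRing C_NormedModule f z.

Definition holomorphic_on (D : C -> Prop) (f : C -> C) : Prop :=
  forall z, D z -> C_differentiable f z.

Definition is_C_polynomial (P : C -> C) : Prop :=
  exists (n : nat) (a : nat -> C),
    forall z : C, P z = @sum_n C_Ring (fun k => mult (a k) (pow_n z k)) n.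

(* Factor [Q1 = lc * prod (z - r_i)]. Since [- Q0 w / Q1 w] never lies in the half-plane
   [A], [Re (Q0 conj Q1) >= 0] on [A].
   - [Q1] has no root [r] in [A]: there [Q0 r <> 0], and [Q1 ~ (z - r)^m q r] near [r], so
     moving from [r] in a direction [d] with [d^m = - Q0 r / q r] makes [Re (Q0 conj Q1)]
     negative.
   - If [Q1 = lc <> 0] is constant then [S = Q0], and [Q0 * conj lc] is holomorphic with
     nonnegative real part on [A]; if it vanishes somewhere it vanishes everywhere, by the
     minimum principle for harmonic functions. The latter follows from the mean value
     property on circles, which is proved with Goursat's bisection argument applied to the
     integral of [f(z) dz / (z - z0)] around polar rectangles.
   - Otherwise every [r_i] has [Re r_i <= 0], so [Re (Q1' conj Q1) = |Q1|^2 sum Re (1/(z - r_i))]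
     is positive on [A], whence [Re (S conj Q1) > 0].
   - If [Q1 = 0] then [S = Q0] and [Q0 w = Q0 w + 1 * Q1 w <> 0]. *)

From Stdlib Require Import Reals Lra Lia List Classical.
From Coquelicot Require Import Coquelicot.
From mathcomp Require ssreflect ssrfun ssrbool eqtype ssrnat seq fintype bigop ssralg poly.
From mathcomp Require Rstruct complex.
Open Scope R_scope.

Lemma eq0_of_Rabs_le_eps (x K : R) :
  (forall eps, 0 < eps -> Rabs x <= eps * K) -> x = 0.
Proof.
  intros Hx.
  destruct (Req_dec x 0) as [E|E]; [exact E|exfalso].
  pose proof (Rabs_pos_lt x E) as Hpos.
  pose proof (Hx 1 Rlt_0_1) as HK.
  assert (HKpos : 0 < K + 1) by lra.
  specialize (Hx (Rabs x / (K + 1)) (Rdiv_lt_0_compat _ _ Hpos HKpos)).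
  assert (Rabs x / (K + 1) * K < Rabs x).
  { apply (Rmult_lt_reg_r (K + 1)); [lra|].
    replace (Rabs x / (K + 1) * K * (K + 1)) with (Rabs x * K) by (field; lra).
    nra. }
  lra.
Qed.

(** * Goursat's bisection argument *)

Record rect := mkrect { ra : R; rb : R; rc : R; rd : R }.

Section Bisection.

Variable I : R -> R -> R -> R -> R.
Variables a0 b0 c0 d0 : R.
Hypothesis hab : a0 <= b0.
Hypothesis hcd : c0 <= d0.
Hypothesis splitx : forall a m b c d, a0 <= a -> a <= m -> m <= b -> b <= b0 ->
  c0 <= c -> c <= d -> d <= d0 -> I a b c d = I a m c d + I m b c d.
Hypothesis splity : forall a b c m d, a0 <= a -> a <= b -> b <= b0 ->
  c0 <= c -> c <= m -> m <= d -> d <= d0 -> I a b c d = I a b c m + I a b m d.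
Hypothesis locally_small : forall x y, a0 <= x <= b0 -> c0 <= y <= d0 ->
  forall eps, 0 < eps -> exists delta, 0 < delta /\
   forall a b c d, a0 <= a -> a <= x -> x <= b -> b <= b0 ->
     c0 <= c -> c <= y -> y <= d -> d <= d0 -> b - a < delta -> d - c < delta ->
     Rabs (I a b c d) <= eps * (b - a + (d - c)) ^ 2.

Let Ir (r : rect) := I (ra r) (rb r) (rc r) (rd r).

Let inside (r : rect) := a0 <= ra r /\ ra r <= rb r /\ rb r <= b0 /\
  c0 <= rc r /\ rc r <= rd r /\ rd r <= d0.

(* By additivity some quarter [q] has [|I r| <= 4 |I q|], so the last one is a safe default. *)
Definition quarter (r : rect) : rect :=
  let a := ra r in let b := rb r in let c := rc r in let d := rd r in
  let m := (a + b) / 2 in let k := (c + d) / 2 in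
  if Rle_dec (Rabs (I a b c d)) (4 * Rabs (I a m c k)) then mkrect a m c k
  else if Rle_dec (Rabs (I a b c d)) (4 * Rabs (I m b c k)) then mkrect m b c k
  else if Rle_dec (Rabs (I a b c d)) (4 * Rabs (I a m k d)) then mkrect a m k d
  else mkrect m b k d.

Lemma quarter_spec r : inside r ->
  let r' := quarter r in
  ra r <= ra r' /\ rb r' <= rb r /\ rc r <= rc r' /\ rd r' <= rd r /\
  rb r' - ra r' = (rb r - ra r) / 2 /\ rd r' - rc r' = (rd r - rc r) / 2 /\
  Rabs (Ir r) <= 4 * Rabs (Ir r').
Proof.
  destruct r as [a b c d]; unfold inside, Ir; simpl; intros (H1 & H2 & H3 & H4 & H5 & H6).
  set (m := (a + b) / 2); set (k := (c + d) / 2).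
  assert (Hsum : I a b c d = I a m c k + I m b c k + I a m k d + I m b k d).
  { rewrite (splitx a m b c d), (splity a m c k d), (splity m b c k d)
      by (unfold m, k; lra).
    ring. }
  unfold quarter; simpl; fold m k.
  destruct (Rle_dec _ (4 * Rabs (I a m c k))); simpl; [unfold m, k in *; repeat split; lra|].
  destruct (Rle_dec _ (4 * Rabs (I m b c k))); simpl; [unfold m, k in *; repeat split; lra|].
  destruct (Rle_dec _ (4 * Rabs (I a m k d))); simpl; [unfold m, k in *; repeat split; lra|].
  repeat split; try (unfold m, k; lra).
  rewrite Hsum in *.
  pose proof (Rabs_triang (I a m c k + I m b c k + I a m k d) (I m b k d)).
  pose proof (Rabs_triang (I a m c k + I m b c k) (I a m k d)).
  pose proof (Rabs_triang (I a m c k) (I m b c k)).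
  lra.
Qed.

Fixpoint nested (n : nat) : rect :=
  match n with O => mkrect a0 b0 c0 d0 | S n => quarter (nested n) end.

Lemma nested_spec n : inside (nested n) /\
  rb (nested n) - ra (nested n) = (b0 - a0) * (/ 2) ^ n /\
  rd (nested n) - rc (nested n) = (d0 - c0) * (/ 2) ^ n /\
  Rabs (I a0 b0 c0 d0) <= 4 ^ n * Rabs (Ir (nested n)).
Proof.
  induction n as [|n IH]; cbn [nested].
  - unfold inside, Ir; simpl; repeat split; lra.
  - destruct IH as (Hin & Hx & Hy & Hi).
    destruct (quarter_spec (nested n) Hin) as (S1 & S2 & S3 & S4 & S5 & S6 & S7).
    unfold inside in *.
    repeat split; try lra.
    + rewrite S5, Hx; simpl; field.
    + rewrite S6, Hy; simpl; field.
    + rewrite <- tech_pow_Rmult; pose proof (pow_le 4 n ltac:(lra)); nra.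
Qed.

Lemma nested_common_point : exists x y, forall n,
  ra (nested n) <= x <= rb (nested n) /\ rc (nested n) <= y <= rd (nested n).
Proof.
  assert (Hmono : forall n k, ra (nested n) <= ra (nested (k + n)) /\
    rb (nested (k + n)) <= rb (nested n) /\ rc (nested n) <= rc (nested (k + n)) /\
    rd (nested (k + n)) <= rd (nested n)).
  { intros n k; induction k as [|k IH]; cbn [nested Nat.add]; [lra|].
    destruct (quarter_spec _ (proj1 (nested_spec (k + n)))) as (S1 & S2 & S3 & S4 & _).
    lra. }
  assert (Hcross : forall n m, ra (nested n) <= rb (nested m) /\
    rc (nested n) <= rd (nested m)).
  { intros n m; destruct (Nat.le_ge_cases n m) as [H|H];
      destruct (Nat.le_exists_sub _ _ H) as [k [-> _]].
    - destruct (Hmono n k); pose proof (proj1 (nested_spec (k + n)));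
        unfold inside in *; lra.
    - destruct (Hmono m k); pose proof (proj1 (nested_spec (k + m)));
        unfold inside in *; lra. }
  assert (Hbx : bound (fun t => exists n, t = ra (nested n))).
  { exists b0; intros t [n ->]; pose proof (proj1 (nested_spec n)); unfold inside in *; lra. }
  assert (Hby : bound (fun t => exists n, t = rc (nested n))).
  { exists d0; intros t [n ->]; pose proof (proj1 (nested_spec n)); unfold inside in *; lra. }
  destruct (completeness _ Hbx (ex_intro _ a0 (ex_intro _ 0%nat eq_refl))) as [x [Hx1 Hx2]].
  destruct (completeness _ Hby (ex_intro _ c0 (ex_intro _ 0%nat eq_refl))) as [y [Hy1 Hy2]].
  exists x, y; intros n; repeat split.
  - apply Hx1; exists n; reflexivity.
  - apply Hx2; intros t [k ->]; apply Hcross.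
  - apply Hy1; exists n; reflexivity.
  - apply Hy2; intros t [k ->]; apply Hcross.
Qed.

(* After [n] quarterings [|I|] has shrunk by a factor at most [4^n], and the squared
   perimeter by exactly [4^n]. *)
Lemma goursat_bisection : I a0 b0 c0 d0 = 0.
Proof.
  destruct nested_common_point as [x [y Hxy]].
  set (s0 := b0 - a0 + (d0 - c0)).
  apply (eq0_of_Rabs_le_eps _ (s0 ^ 2)); intros eps Heps.
  destruct (Hxy 0%nat) as [Hx0 Hy0]; simpl in Hx0, Hy0.
  destruct (locally_small x y Hx0 Hy0 eps Heps) as [delta [Hd Hloc]].
  destruct (pow_lt_1_zero (/ 2) ltac:(rewrite Rabs_pos_eq; lra) (delta / (s0 + 1)))
    as [N HN]; [apply Rdiv_lt_0_compat; unfold s0; lra|].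
  specialize (HN N (le_n N)); rewrite Rabs_pos_eq in HN by (apply pow_le; lra).
  assert (Hh : 0 < (/ 2) ^ N) by (apply pow_lt; lra).
  assert (Hsmall : s0 * (/ 2) ^ N < delta).
  { apply (Rmult_lt_compat_r (s0 + 1)) in HN; [|unfold s0; lra].
    unfold Rdiv in HN; rewrite Rmult_assoc, Rinv_l in HN by (unfold s0; lra).
    unfold s0 in *; nra. }
  destruct (nested_spec N) as (Hin & Hsx & Hsy & Hi); destruct (Hxy N) as [HxN HyN].
  unfold inside, Ir in *.
  assert (HIN := Hloc (ra (nested N)) (rb (nested N)) (rc (nested N)) (rd (nested N))
    ltac:(lra) (proj1 HxN) (proj2 HxN) ltac:(lra)
    ltac:(lra) (proj1 HyN) (proj2 HyN) ltac:(lra)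
    ltac:(unfold s0 in Hsmall; nra) ltac:(unfold s0 in Hsmall; nra)).
  rewrite Hsx, Hsy in HIN.
  replace ((b0 - a0) * (/ 2) ^ N + (d0 - c0) * (/ 2) ^ N) with (s0 * (/ 2) ^ N)
    in HIN by (unfold s0; ring).
  assert (H4 : 4 ^ N * ((/ 2) ^ N * (/ 2) ^ N) = 1).
  { rewrite <- !Rpow_mult_distr; replace (4 * (/ 2 * / 2)) with 1 by field; apply pow1. }
  pose proof (pow_le 4 N ltac:(lra)).
  apply (Rle_trans _ _ _ Hi).
  replace (eps * s0 ^ 2) with (4 ^ N * (eps * (s0 * (/ 2) ^ N) ^ 2))
    by (rewrite <- (Rmult_1_r (eps * s0 ^ 2)), <- H4 at 1; ring).
  apply Rmult_le_compat_l; assumption.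
Qed.

End Bisection.

Notation is_C_derive := (@is_derive C_AbsRing C_NormedModule).

Lemma is_C_derive_ring (f : C -> C) z l :
  is_C_derive f z l <-> @is_derive C_AbsRing (AbsRing_NormedModule C_AbsRing) f z l.
Proof.
  split; intros [_ Hd]; (split; [apply is_linear_scal_l | exact Hd]).
Qed.

Lemma is_C_derive_mult (f g : C -> C) z df dg :
  is_C_derive f z df -> is_C_derive g z dg ->
  is_C_derive (fun w => f w * g w)%C z (df * g z + f z * dg)%C.
Proof.
  rewrite !is_C_derive_ring; intros Hf Hg.
  exact (is_derive_mult f g z df dg Hf Hg Cmult_comm).
Qed.

Lemma is_C_derive_const (a z : C) : is_C_derive (fun _ => a) z (RtoC 0).
Proof. apply (@is_derive_const C_AbsRing C_NormedModule). Qed.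

Lemma is_C_derive_sub_const (a z : C) : is_C_derive (fun w => w - a)%C z (RtoC 1).
Proof.
  apply is_C_derive_ring.
  apply (@is_derive_ext C_AbsRing _ (fun w => minus w a)); [reflexivity|].
  replace (RtoC 1) with (@minus C_AbsRing one zero) by (apply injective_projections; simpl; ring).
  exact (@is_derive_minus C_AbsRing (AbsRing_NormedModule C_AbsRing) (fun w => w)
    (fun _ => a) z one zero (is_derive_id z)
    (@is_derive_const C_AbsRing (AbsRing_NormedModule C_AbsRing) a z)).
Qed.

Lemma is_C_derive_approx (f : C -> C) (z l : C) : is_C_derive f z l ->
  forall eps, 0 < eps -> exists delta, 0 < delta /\
   forall w, Cmod (w - z) < delta ->
     Cmod (f w - f z - l * (w - z))%C <= eps * Cmod (w - z)%C.
Proof.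
  intros [_ Hd] eps Heps.
  destruct (Hd z (fun P HP => HP) (mkposreal eps Heps)) as [delta Hdelta].
  exists delta; split; [apply cond_pos|]; intros w Hw.
  replace (f w - f z - l * (w - z))%C with (minus (minus (f w) (f z)) (scal (minus w z) l))
    by (apply injective_projections; simpl; ring).
  exact (Hdelta w Hw).
Qed.

Definition Ccontinuous (g : C -> C) (z : C) : Prop :=
  forall eps, 0 < eps -> exists delta, 0 < delta /\
    forall w, Cmod (w - z) < delta -> Cmod (g w - g z) <= eps.

Lemma C_differentiable_continuous (f : C -> C) z : C_differentiable f z -> Ccontinuous f z.
Proof.
  intros [l Hl] eps Heps.
  destruct (is_C_derive_approx f z l Hl 1 Rlt_0_1) as [d1 [Hd1 H1]].
  pose proof (Cmod_ge_0 l).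
  exists (Rmin d1 (eps / (Cmod l + 1))); split.
  { apply Rmin_pos; [lra | apply Rdiv_lt_0_compat; lra]. }
  intros w Hw.
  assert (Hw1 := Rlt_le_trans _ _ _ Hw (Rmin_l _ _)).
  assert (Hw2 := Rlt_le_trans _ _ _ Hw (Rmin_r _ _)).
  assert (Hsmall : Cmod (w - z) * (Cmod l + 1) < eps).
  { apply (Rmult_lt_compat_r (Cmod l + 1)) in Hw2; [|lra].
    unfold Rdiv in Hw2; rewrite Rmult_assoc, Rinv_l in Hw2 by lra; lra. }
  replace (f w - f z)%C with ((f w - f z - l * (w - z)) + l * (w - z))%C by ring.
  eapply Rle_trans; [apply Cmod_triangle|].
  rewrite Cmod_mult; specialize (H1 w Hw1); nra.
Qed.

Lemma Ccontinuous_affine (A l z : C) : Ccontinuous (fun w => A + l * w)%C z.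
Proof.
  intros eps Heps; pose proof (Cmod_ge_0 l).
  exists (eps / (Cmod l + 1)); split; [apply Rdiv_lt_0_compat; lra|]; intros w Hw.
  replace (A + l * w - (A + l * z))%C with (l * (w - z))%C by ring.
  rewrite Cmod_mult.
  apply (Rmult_lt_compat_r (Cmod l + 1)) in Hw; [|lra].
  unfold Rdiv in Hw; rewrite Rmult_assoc, Rinv_l in Hw by lra.
  pose proof (Cmod_ge_0 (w - z)); nra.
Qed.

Lemma Cmod_Im_le (c : C) : Rabs (Im c) <= Cmod c.
Proof. eapply Rle_trans; [apply Rmax_r | apply Rmax_Cmod]. Qed.

Lemma Re_div (a b : C) : b <> RtoC 0 -> Re (a / b)%C = Re (a * Cconj b)%C / Cmod b ^ 2.
Proof.
  intros Hb; apply Cmod_gt_0 in Hb; pose proof (pow_lt _ 2 Hb) as Hb2.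
  rewrite Cmod2_alt in *; unfold Cdiv, Cinv, Re, Im in *; simpl in *; field; lra.
Qed.

Lemma Re_pos_of_Cmod_lt (p w : C) : Cmod (w - p) < Re p -> 0 < Re w.
Proof.
  intros Hw; pose proof (re_le_Cmod (w - p)) as H.
  unfold Re in *; simpl in H; apply Rabs_le_between in H; lra.
Qed.

Lemma continuous_comp_Lipschitz (g : C -> C) (p : R -> C) (t0 K : R) :
  (forall t, Cmod (p t - p t0) <= K * Rabs (t - t0)) -> Ccontinuous g (p t0) ->
  continuous (fun t => Re (g (p t))) t0 /\ continuous (fun t => Im (g (p t))) t0.
Proof.
  intros Hp Hg.
  assert (H : forall eps, 0 < eps -> exists delta, 0 < delta /\
    forall t, Rabs (t - t0) < delta -> Cmod (g (p t) - g (p t0)) <= eps).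
  { intros eps Heps; destruct (Hg eps Heps) as [d [Hd Hgd]].
    assert (HK : 0 < Rabs K + 1) by (pose proof (Rabs_pos K); lra).
    exists (d / (Rabs K + 1)); split; [apply Rdiv_lt_0_compat; lra|]; intros t Ht.
    apply Hgd, (Rle_lt_trans _ _ _ (Hp t)).
    apply (Rmult_lt_compat_r (Rabs K + 1)) in Ht; [|lra].
    unfold Rdiv in Ht; rewrite Rmult_assoc, Rinv_l in Ht by lra.
    assert (K * Rabs (t - t0) <= Rabs K * Rabs (t - t0))
      by (apply Rmult_le_compat_r; [apply Rabs_pos | apply Rle_abs]).
    pose proof (Rabs_pos (t - t0)); nra. }
  split; apply continuity_pt_filterlim; intros eps Heps;
    destruct (H (eps / 2) ltac:(lra)) as [d [Hd Hd']];
    exists d; split; [exact Hd | | exact Hd |]; intros t [_ Ht]; simpl in *;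
    unfold R_dist in *; specialize (Hd' t Ht).
  - pose proof (re_le_Cmod (g (p t) - g (p t0))); unfold Re, Rminus in *; simpl in *; lra.
  - pose proof (Cmod_Im_le (g (p t) - g (p t0))); unfold Im, Rminus in *; simpl in *; lra.
Qed.

Lemma Ccontinuous_mult (f g : C -> C) z : Ccontinuous f z -> Ccontinuous g z ->
  Ccontinuous (fun w => f w * g w)%C z.
Proof.
  intros Hf Hg eps Heps.
  set (Kf := Cmod (f z) + 1); set (Kg := Cmod (g z) + 1).
  assert (HKf : 0 < Kf) by (unfold Kf; pose proof (Cmod_ge_0 (f z)); lra).
  assert (HKg : 0 < Kg) by (unfold Kg; pose proof (Cmod_ge_0 (g z)); lra).
  destruct (Hf (eps / (2 * Kg)) ltac:(apply Rdiv_lt_0_compat; lra)) as [d1 [Hd1 H1]].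
  destruct (Hg (Rmin 1 (eps / (2 * Kf)))
    ltac:(apply Rmin_pos; [lra | apply Rdiv_lt_0_compat; lra])) as [d2 [Hd2 H2]].
  exists (Rmin d1 d2); split; [apply Rmin_pos; lra|]; intros w Hw.
  specialize (H1 w (Rlt_le_trans _ _ _ Hw (Rmin_l _ _))).
  specialize (H2 w (Rlt_le_trans _ _ _ Hw (Rmin_r _ _))).
  pose proof (Rmin_l 1 (eps / (2 * Kf))); pose proof (Rmin_r 1 (eps / (2 * Kf))).
  assert (Hgw : Cmod (g w) <= Kg).
  { replace (g w) with (g w - g z + g z)%C by ring.
    eapply Rle_trans; [apply Cmod_triangle | unfold Kg; lra]. }
  replace (f w * g w - f z * g z)%C with ((f w - f z) * g w + f z * (g w - g z))%C by ring.
  eapply Rle_trans; [apply Cmod_triangle|]; rewrite !Cmod_mult.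
  assert (Cmod (f w - f z) * Cmod (g w) <= eps / (2 * Kg) * Kg)
    by (apply Rmult_le_compat; try apply Cmod_ge_0; lra).
  assert (Cmod (f z) * Cmod (g w - g z) <= Kf * (eps / (2 * Kf)))
    by (apply Rmult_le_compat; try apply Cmod_ge_0; unfold Kf in *; lra).
  replace eps with (eps / (2 * Kg) * Kg + Kf * (eps / (2 * Kf))) by (field; lra).
  lra.
Qed.

Lemma Ccontinuous_conj (g : C -> C) z : Ccontinuous g z ->
  Ccontinuous (fun w => Cconj (g w)) z.
Proof.
  intros Hg eps Heps; destruct (Hg eps Heps) as [d [Hd H]].
  exists d; split; [exact Hd | intros w Hw; rewrite <- Cminus_conj, Cmod_conj; auto].
Qed.

Lemma Ccontinuous_const (c z : C) : Ccontinuous (fun _ => c) z.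
Proof.
  intros eps Heps; exists 1; split; [lra | intros w _].
  replace (c - c)%C with (RtoC 0) by ring; rewrite Cmod_0; lra.
Qed.

Lemma Ccontinuous_Re_neg (h : C -> C) z : Ccontinuous h z -> Re (h z) < 0 ->
  exists delta, 0 < delta /\ forall w, Cmod (w - z) < delta -> Re (h w) < 0.
Proof.
  intros Hh Hz; destruct (Hh (- Re (h z) / 2) ltac:(lra)) as [delta [Hdelta Hnear]].
  exists delta; split; [exact Hdelta|]; intros w Hw.
  pose proof (re_le_Cmod (h w - h z)) as Hre; specialize (Hnear w Hw).
  apply Rabs_le_between in Hre; unfold Re in *; simpl in Hre; lra.
Qed.

Lemma exists_small_multiple (d : C) rho : 0 < rho ->
  exists t, 0 < t /\ Cmod (RtoC t * d)%C < rho.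
Proof.
  intros Hrho; pose proof (Cmod_ge_0 d).
  exists (rho / (2 * (Cmod d + 1))); split; [apply Rdiv_lt_0_compat; lra|].
  rewrite Cmod_mult, Cmod_R, Rabs_pos_eq by (left; apply Rdiv_lt_0_compat; lra).
  assert (rho / (2 * (Cmod d + 1)) * (Cmod d + 1) = rho / 2) by (field; lra).
  assert (0 < rho / (2 * (Cmod d + 1))) by (apply Rdiv_lt_0_compat; lra).
  nra.
Qed.

Lemma Rabs_sin_le x : Rabs (sin x) <= Rabs x.
Proof.
  assert (H : forall y, 0 <= y -> Rabs (sin y) <= y).
  { intros y Hy; apply Rabs_le; split.
    - destruct (Rle_dec y PI) as [Hp|Hp].
      + pose proof (sin_ge_0 y Hy Hp); lra.
      + pose proof (SIN_bound y); pose proof PI2_3_2; lra.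
    - destruct (Req_dec y 0) as [->|Hy0]; [rewrite sin_0; lra|].
      left; apply sin_lt_x; lra. }
  destruct (Rle_dec 0 x) as [Hx|Hx].
  - rewrite (Rabs_pos_eq x Hx); apply H, Hx.
  - rewrite <- Rabs_Ropp, <- sin_neg, (Rabs_left x) by lra; apply H; lra.
Qed.

Definition expi (t : R) : C := (cos t, sin t).

Lemma Cmod_expi t : Cmod (expi t) = 1.
Proof.
  unfold Cmod, expi; simpl; pose proof (sin2_cos2 t) as H; unfold Rsqr in H.
  replace (cos t * (cos t * 1) + sin t * (sin t * 1)) with 1 by lra; apply sqrt_1.
Qed.

(* [|e^{it} - e^{it'}| = 2 |sin ((t - t') / 2)|]. *)
Lemma Cmod_expi_sub t t' : Cmod (expi t - expi t')%C <= Rabs (t - t').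
Proof.
  set (u := (t - t') / 2).
  assert (Hchord : Cmod (expi t - expi t')%C ^ 2 = 4 * sin u ^ 2).
  { rewrite Cmod2_alt; unfold expi; simpl.
    replace t with (t' + 2 * u) by (unfold u; field).
    rewrite cos_plus, sin_plus, cos_2a, sin_2a.
    pose proof (sin2_cos2 t'); pose proof (sin2_cos2 u); unfold Rsqr in *; nra. }
  replace (Rabs (t - t')) with (2 * Rabs u)
    by (unfold u, Rdiv; rewrite Rabs_mult, (Rabs_pos_eq (/ 2)) by lra; field).
  apply Rsqr_incr_0_var; [|pose proof (Rabs_pos u); lra].
  rewrite !Rsqr_pow2, Hchord.
  pose proof (Rabs_sin_le u); pose proof (Rabs_pos (sin u)).
  rewrite <- (pow2_abs (sin u)); nra.
Qed.

Definition polar (z0 : C) (r t : R) : C := (z0 + RtoC r * expi t)%C.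

Lemma Cmod_polar_sub z0 r t r' t' :
  Cmod (polar z0 r t - polar z0 r' t')%C <= Rabs (r - r') + Rabs r' * Rabs (t - t').
Proof.
  replace (polar z0 r t - polar z0 r' t')%C
    with (RtoC (r - r') * expi t + RtoC r' * (expi t - expi t'))%C
    by (unfold polar, expi, RtoC; apply injective_projections; simpl; ring).
  eapply Rle_trans; [apply Cmod_triangle|].
  rewrite !Cmod_mult, !Cmod_R, Cmod_expi.
  pose proof (Cmod_expi_sub t t'); pose proof (Rabs_pos r').
  apply Rplus_le_compat; [lra | apply Rmult_le_compat_l; assumption].
Qed.

Lemma Cmod_polar_center z0 r t : Cmod (polar z0 r t - z0)%C = Rabs r.
Proof.
  replace (polar z0 r t - z0)%C with (RtoC r * expi t)%C
    by (unfold polar, expi, RtoC; apply injective_projections; simpl; ring).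
  rewrite Cmod_mult, Cmod_R, Cmod_expi; ring.
Qed.

Lemma Cmod_polar_sub_rect z0 a b c d r t x y : 0 <= x ->
  a <= r <= b -> a <= x <= b -> c <= t <= d -> c <= y <= d ->
  Cmod (polar z0 r t - polar z0 x y)%C <= (1 + x) * (b - a + (d - c)).
Proof.
  intros Hx Hr Hxab Ht Hy; eapply Rle_trans; [apply Cmod_polar_sub|].
  rewrite (Rabs_pos_eq x) by lra.
  assert (Rabs (r - x) <= b - a) by (apply Rabs_le; lra).
  assert (Rabs (t - y) <= d - c) by (apply Rabs_le; lra).
  assert (x * Rabs (t - y) <= x * (d - c)) by (apply Rmult_le_compat_l; lra).
  nra.
Qed.

Lemma polar_surjective z0 w : w <> z0 ->
  exists t, 0 <= t <= 2 * PI /\ polar z0 (Cmod (w - z0)) t = w.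
Proof.
  intros Hw; pose proof PI_RGT_0.
  set (u := (w - z0)%C); set (r := Cmod u).
  assert (Hr : 0 < r).
  { apply Cmod_gt_0; unfold u; intros E; apply Hw.
    replace w with ((w - z0) + z0)%C by ring; rewrite E; ring. }
  assert (Hr2 : r ^ 2 = fst u ^ 2 + snd u ^ 2) by apply Cmod2_alt.
  set (x := fst u / r).
  assert (Hx2 : 1 - x ^ 2 = (snd u / r) ^ 2).
  { unfold x; replace 1 with (r ^ 2 / r ^ 2) at 1 by (field; lra).
    rewrite Hr2 at 1; field; lra. }
  assert (Hx : -1 <= x <= 1) by (pose proof (pow2_ge_0 (snd u / r)); split; nra).
  assert (Hsin : sin (acos x) = Rabs (snd u / r))
    by (rewrite sin_acos, Rsqr_pow2, Hx2, <- Rsqr_pow2 by exact Hx; apply sqrt_Rsqr_abs).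
  assert (Hpolar : forall t, cos t = x -> sin t = snd u / r -> polar z0 r t = w).
  { intros t Hc Hs; unfold polar, expi, RtoC; rewrite Hc, Hs; unfold x.
    replace w with (z0 + u)%C by (unfold u; ring).
    apply injective_projections; simpl; field; lra. }
  pose proof (acos_bound x).
  destruct (Rle_dec 0 (snd u)) as [Hp|Hn].
  - exists (acos x); split; [lra|]; apply Hpolar; [apply cos_acos, Hx|].
    rewrite Hsin, Rabs_pos_eq; [reflexivity | apply Rdiv_le_0_compat; lra].
  - exists (2 * PI - acos x); split; [lra|]; apply Hpolar.
    + rewrite cos_minus, cos_2PI, sin_2PI, cos_acos by exact Hx; ring.
    + rewrite sin_minus, cos_2PI, sin_2PI, Hsin, Rabs_left; [field; lra|].
      unfold Rdiv; apply Rmult_neg_pos; [lra | apply Rinv_0_lt_compat; lra].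
Qed.

(** * The mean value property *)

Lemma RInt_dist_le (g h : R -> R) a b M : a <= b -> ex_RInt g a b -> ex_RInt h a b ->
  (forall t, a <= t <= b -> Rabs (g t - h t) <= M) ->
  Rabs (RInt g a b - RInt h a b) <= (b - a) * M.
Proof.
  intros Hab Hg Hh HM.
  pose proof (RInt_minus g h a b Hg Hh) as E.
  change (minus (RInt g a b) (RInt h a b)) with (RInt g a b - RInt h a b) in E.
  rewrite <- E.
  apply abs_RInt_le_const; [exact Hab | apply ex_RInt_minus; assumption | exact HM].
Qed.

Lemma Rabs_sub_add_sub_le p q r s :
  Rabs (p - q + r - s) <= Rabs p + Rabs q + Rabs r + Rabs s.
Proof.
  pose proof (Rabs_triang (p - q + r) (- s)); pose proof (Rabs_triang (p - q) r).
  pose proof (Rabs_triang p (- q)); rewrite Rabs_Ropp in *; unfold Rminus in *; lra.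
Qed.

Section PolarCycle.

Variable z0 : C.

(* The real part of [(1/i) ∮ g(z) dz / (z - z0)] along the positively oriented boundary
   of the polar rectangle [z0 + r e^{it} | a <= r <= b, c <= t <= d]. *)
Definition polar_cycle (g : C -> C) (a b c d : R) : R :=
  RInt (fun r => Im (g (polar z0 r c)) / r) a b - RInt (fun r => Im (g (polar z0 r d)) / r) a b
  + RInt (fun t => Re (g (polar z0 b t))) c d - RInt (fun t => Re (g (polar z0 a t))) c d.

Lemma continuous_arc (g : C -> C) r t : Ccontinuous g (polar z0 r t) ->
  continuous (fun t => Re (g (polar z0 r t))) t.
Proof.
  intros Hg; refine (proj1 (continuous_comp_Lipschitz g (polar z0 r) t (Rabs r) _ Hg)).
  intros t'; eapply Rle_trans; [apply Cmod_polar_sub|].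
  rewrite Rminus_diag, Rabs_R0; lra.
Qed.

Lemma continuous_ray (g : C -> C) r t : Ccontinuous g (polar z0 r t) ->
  continuous (fun r => Im (g (polar z0 r t))) r.
Proof.
  intros Hg; refine (proj2 (continuous_comp_Lipschitz g (fun r => polar z0 r t) r 1 _ Hg)).
  intros r'; eapply Rle_trans; [apply Cmod_polar_sub|].
  rewrite Rminus_diag, Rabs_R0; lra.
Qed.

Lemma ex_RInt_arc (g : C -> C) r c d : (forall t, Ccontinuous g (polar z0 r t)) ->
  ex_RInt (fun t => Re (g (polar z0 r t))) c d.
Proof.
  intros Hg; apply (@ex_RInt_continuous R_CompleteNormedModule); intros t _.
  apply continuous_arc, Hg.
Qed.

Lemma ex_RInt_ray (g : C -> C) t a b : 0 < a <= b ->
  (forall r, a <= r <= b -> Ccontinuous g (polar z0 r t)) ->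
  ex_RInt (fun r => Im (g (polar z0 r t)) / r) a b.
Proof.
  intros Hab Hg; apply (@ex_RInt_continuous R_CompleteNormedModule); intros r Hr.
  rewrite Rmin_left, Rmax_right in Hr by lra.
  apply (continuous_mult (fun r => Im (g (polar z0 r t))) Rinv).
  - apply continuous_ray, Hg, Hr.
  - apply continuity_pt_filterlim, (continuity_pt_inv id); [apply continuity_pt_id|].
    unfold id; lra.
Qed.

Lemma polar_cycle_splitx g a m b c d : 0 < a <= m -> m <= b ->
  (forall r t, a <= r <= b -> Ccontinuous g (polar z0 r t)) ->
  polar_cycle g a b c d = polar_cycle g a m c d + polar_cycle g m b c d.
Proof.
  intros Ham Hmb Hg; unfold polar_cycle.
  rewrite <- (RInt_Chasles (fun r => Im (g (polar z0 r c)) / r) a m b),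
    <- (RInt_Chasles (fun r => Im (g (polar z0 r d)) / r) a m b)
    by (apply ex_RInt_ray; [lra | intros r Hr; apply Hg; lra]).
  unfold plus; simpl; ring.
Qed.

Lemma polar_cycle_splity g a b c m d : a <= b ->
  (forall r t, a <= r <= b -> Ccontinuous g (polar z0 r t)) ->
  polar_cycle g a b c d = polar_cycle g a b c m + polar_cycle g a b m d.
Proof.
  intros Hab Hg; unfold polar_cycle.
  rewrite <- (RInt_Chasles (fun t => Re (g (polar z0 b t))) c m d),
    <- (RInt_Chasles (fun t => Re (g (polar z0 a t))) c m d)
    by (apply ex_RInt_arc; intros t; apply Hg; lra).
  unfold plus; simpl; ring.
Qed.

Lemma polar_cycle_affine (A l : C) a b c d : 0 < a <= b ->
  polar_cycle (fun w => A + l * w)%C a b c d = 0.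
Proof.
  intros Hab.
  set (B := (A + l * z0)%C).
  set (k := fun t => fst l * sin t + snd l * cos t).
  set (S := fun r => snd B * ln r).
  set (T := fun r t => fst B * t + r * (fst l * sin t + snd l * cos t)).
  assert (Hray : forall t, is_RInt (fun r => Im (A + l * polar z0 r t)%C / r) a b
                                   (S b + b * k t - (S a + a * k t))).
  { intros t.
    apply (is_RInt_ext (fun r => snd B / r + k t)).
    { intros r Hr; rewrite Rmin_left in Hr by lra.
      unfold B, k, polar, expi; simpl; field; lra. }
    apply (@is_RInt_derive R_CompleteNormedModule (fun r => S r + r * k t));
      intros r Hr; rewrite Rmin_left in Hr by lra; unfold S.
    - auto_derive; [lra | unfold B; simpl; field; lra].
    - apply (@ex_derive_continuous R_AbsRing R_NormedModule); auto_derive; lra. }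
  assert (Harc : forall r, is_RInt (fun t => Re (A + l * polar z0 r t)%C) c d
                                   (T r d - T r c)).
  { intros r.
    apply (@is_RInt_derive R_CompleteNormedModule (T r)); intros t _; unfold T.
    - auto_derive; [auto | unfold B, polar, expi, Re; simpl; ring].
    - apply (continuous_arc (fun w => A + l * w)%C), Ccontinuous_affine. }
  unfold polar_cycle.
  rewrite (is_RInt_unique _ _ _ _ (Hray c)), (is_RInt_unique _ _ _ _ (Hray d)),
    (is_RInt_unique _ _ _ _ (Harc b)), (is_RInt_unique _ _ _ _ (Harc a)).
  unfold T, k; ring.
Qed.

Lemma polar_cycle_close (g h : C -> C) a b c d M : 0 < a <= b -> c <= d ->
  (forall r t, a <= r <= b -> Ccontinuous g (polar z0 r t)) ->
  (forall r t, a <= r <= b -> Ccontinuous h (polar z0 r t)) ->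
  (forall r t, a <= r <= b -> c <= t <= d -> Cmod (g (polar z0 r t) - h (polar z0 r t)) <= M) ->
  Rabs (polar_cycle g a b c d - polar_cycle h a b c d) <= M * (2 * (b - a) / a + 2 * (d - c)).
Proof.
  intros Hab Hcd Hg Hh HM.
  assert (Hray : forall t, c <= t <= d ->
    Rabs (RInt (fun r => Im (g (polar z0 r t)) / r) a b
          - RInt (fun r => Im (h (polar z0 r t)) / r) a b) <= (b - a) * (M / a)).
  { intros t Ht; apply RInt_dist_le;
      [lra | apply ex_RInt_ray; auto; lra | apply ex_RInt_ray; auto; lra |].
    intros r Hr.
    replace (Im (g (polar z0 r t)) / r - Im (h (polar z0 r t)) / r)
      with (Im (g (polar z0 r t) - h (polar z0 r t)) / r) by (unfold Im; simpl; field; lra).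
    unfold Rdiv; rewrite Rabs_mult, Rabs_inv, (Rabs_pos_eq r) by lra.
    pose proof (Cmod_Im_le (g (polar z0 r t) - h (polar z0 r t))).
    pose proof (HM r t Hr Ht); pose proof (Rabs_pos (Im (g (polar z0 r t) - h (polar z0 r t)))).
    apply Rmult_le_compat; [lra | left; apply Rinv_0_lt_compat; lra | lra |].
    apply Rinv_le_contravar; lra. }
  assert (Harc : forall r, a <= r <= b ->
    Rabs (RInt (fun t => Re (g (polar z0 r t))) c d - RInt (fun t => Re (h (polar z0 r t))) c d)
      <= (d - c) * M).
  { intros r Hr; apply RInt_dist_le;
      [lra | apply ex_RInt_arc; auto | apply ex_RInt_arc; auto |].
    intros t Ht.
    replace (Re (g (polar z0 r t)) - Re (h (polar z0 r t)))
      with (Re (g (polar z0 r t) - h (polar z0 r t))) by (unfold Re; simpl; ring).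
    eapply Rle_trans; [apply re_le_Cmod | apply HM; assumption]. }
  pose proof (Hray c ltac:(lra)); pose proof (Hray d ltac:(lra)).
  pose proof (Harc a ltac:(lra)); pose proof (Harc b ltac:(lra)).
  unfold polar_cycle.
  match goal with |- Rabs (?x1 - ?x2 + ?x3 - ?x4 - (?y1 - ?y2 + ?y3 - ?y4)) <= _ =>
    replace (x1 - x2 + x3 - x4 - (y1 - y2 + y3 - y4))
      with ((x1 - y1) - (x2 - y2) + (x3 - y3) - (x4 - y4)) by ring
  end.
  eapply Rle_trans; [apply Rabs_sub_add_sub_le|].
  replace (M * (2 * (b - a) / a + 2 * (d - c)))
    with (2 * ((b - a) * (M / a)) + 2 * ((d - c) * M)) by (field; lra).
  lra.
Qed.

End PolarCycle.

Section MeanValue.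

Variables (f : C -> C) (z0 : C) (R0 : R).
Hypothesis hol : forall w, Cmod (w - z0) < R0 -> C_differentiable f w.

Lemma continuous_annulus r t : 0 <= r < R0 -> Ccontinuous f (polar z0 r t).
Proof.
  intros Hr; apply C_differentiable_continuous, hol.
  rewrite Cmod_polar_center, Rabs_pos_eq; lra.
Qed.

(* On a small polar rectangle around [p], [f] is within [o(size)] of its tangent map at [p],
   whose cycle integral vanishes. *)
Lemma polar_cycle_locally_small r1 r2 x y : 0 < r1 -> r2 < R0 -> r1 <= x <= r2 ->
  forall eps, 0 < eps -> exists delta, 0 < delta /\
   forall a b c d, r1 <= a -> a <= x -> x <= b -> b <= r2 ->
     c <= y -> y <= d -> b - a < delta -> d - c < delta ->
     Rabs (polar_cycle z0 f a b c d) <= eps * (b - a + (d - c)) ^ 2.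
Proof.
  intros h1 h2 hx eps Heps.
  set (p := polar z0 x y).
  destruct (hol p ltac:(unfold p; rewrite Cmod_polar_center, Rabs_pos_eq; lra)) as [l Hl].
  set (K := 1 + R0).
  assert (HK : 0 < 2 / r1 + 2) by (assert (0 < 2 / r1) by (apply Rdiv_lt_0_compat; lra); lra).
  set (e := eps / (K * (2 / r1 + 2))).
  assert (He : 0 < e) by (apply Rdiv_lt_0_compat; [lra | apply Rmult_lt_0_compat; unfold K; lra]).
  destruct (is_C_derive_approx f p l Hl e He) as [d1 [Hd1 Happrox]].
  exists (d1 / (2 * K)); split; [apply Rdiv_lt_0_compat; unfold K; lra|].
  intros a b c d Ha1 Ha2 Hb1 Hb2 Hc Hd Hab Hcd.
  set (s := b - a + (d - c)).
  assert (HKs : K * s < d1).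
  { assert (d1 / (2 * K) * (2 * K) = d1) by (field; unfold K; lra).
    assert (0 < K) by (unfold K; lra); unfold s; nra. }
  assert (Hclose : forall r t, a <= r <= b -> c <= t <= d ->
     Cmod (f (polar z0 r t) - (f p - l * p + l * polar z0 r t))%C <= e * (K * s)).
  { intros r t Hr Ht.
    assert (Hdist : Cmod (polar z0 r t - p) <= K * s).
    { eapply Rle_trans; [apply (Cmod_polar_sub_rect z0 a b c d); lra|].
      apply Rmult_le_compat_r; unfold K, s; lra. }
    replace (f (polar z0 r t) - (f p - l * p + l * polar z0 r t))%C
      with (f (polar z0 r t) - f p - l * (polar z0 r t - p))%C by ring.
    eapply Rle_trans; [apply Happrox; lra|].
    apply Rmult_le_compat_l; lra. }
  assert (Hcycle := polar_cycle_close z0 f (fun w => f p - l * p + l * w)%C a b c d (e * (K * s))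
    ltac:(lra) ltac:(lra) (fun r t Hr => continuous_annulus r t ltac:(lra))
    (fun r t _ => Ccontinuous_affine _ _ _) Hclose).
  rewrite polar_cycle_affine, Rminus_0_r in Hcycle by lra.
  apply (Rle_trans _ _ _ Hcycle).
  assert (0 <= e * (K * s)) by (apply Rmult_le_pos; [lra | unfold K, s; nra]).
  assert (2 * (b - a) / a <= 2 * s / r1).
  { apply Rmult_le_compat; [| left; apply Rinv_0_lt_compat | unfold s |
      apply Rinv_le_contravar]; lra. }
  replace (eps * s ^ 2) with (e * (K * s) * (2 * s / r1 + 2 * s))
    by (unfold e; field; split; [lra | unfold K; lra]).
  assert (d - c <= s) by (unfold s; lra).
  apply Rmult_le_compat_l; [assumption | lra].
Qed.

Lemma polar_cycle_vanishes r1 r2 : 0 < r1 <= r2 -> r2 < R0 ->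
  polar_cycle z0 f r1 r2 0 (2 * PI) = 0.
Proof.
  intros h12 h2; pose proof PI_RGT_0.
  apply (goursat_bisection (polar_cycle z0 f) r1 r2 0 (2 * PI)); [lra | lra | | |].
  - intros; apply polar_cycle_splitx; [lra | lra |].
    intros r t Hr; apply continuous_annulus; lra.
  - intros; apply polar_cycle_splity; [lra |].
    intros r t Hr; apply continuous_annulus; lra.
  - intros x y Hx Hy eps Heps.
    destruct (polar_cycle_locally_small r1 r2 x y ltac:(lra) h2 Hx eps Heps)
      as [d [Hd Hsmall]].
    exists d; split; [exact Hd | intros; apply Hsmall; assumption].
Qed.

Lemma circle_integral_indep r1 r2 : 0 < r1 <= r2 -> r2 < R0 ->
  RInt (fun t => Re (f (polar z0 r1 t))) 0 (2 * PI)
  = RInt (fun t => Re (f (polar z0 r2 t))) 0 (2 * PI).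
Proof.
  intros h12 h2; pose proof (polar_cycle_vanishes r1 r2 h12 h2) as H.
  assert (Hperiod : expi (2 * PI) = expi 0)
    by (unfold expi; rewrite cos_2PI, sin_2PI, cos_0, sin_0; reflexivity).
  unfold polar_cycle, polar in *; rewrite Hperiod in H; lra.
Qed.

(* The circle average does not depend on the radius and tends to [Re (f z0)] as the radius
   tends to [0]. *)
Lemma mean_value_Re r : 0 < r < R0 ->
  RInt (fun t => Re (f (polar z0 r t))) 0 (2 * PI) = 2 * PI * Re (f z0).
Proof.
  intros Hr; pose proof PI_RGT_0.
  set (F := RInt (fun t => Re (f (polar z0 r t))) 0 (2 * PI)).
  apply Rminus_diag_uniq, (eq0_of_Rabs_le_eps _ (2 * PI)); intros eps Heps.
  assert (Hz0 : Cmod (z0 - z0) < R0)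
    by (replace (z0 - z0)%C with (RtoC 0) by ring; rewrite Cmod_0; lra).
  destruct (C_differentiable_continuous f z0 (hol z0 Hz0) eps Heps) as [d [Hd Hcont]].
  set (r' := Rmin r (d / 2)).
  assert (Hr' : 0 < r' <= r) by (split; [apply Rmin_pos; lra | apply Rmin_l]).
  assert (Hr'd : r' < d) by (eapply Rle_lt_trans; [apply Rmin_r | lra]).
  assert (Hclose := RInt_dist_le (fun t => Re (f (polar z0 r' t))) (fun _ => Re (f z0))
    0 (2 * PI) eps ltac:(lra)
    (ex_RInt_arc z0 f r' 0 (2 * PI) (fun t => continuous_annulus r' t ltac:(lra)))
    (ex_RInt_const _ _ _)).
  rewrite (circle_integral_indep r' r), RInt_const in Hclose by lra; fold F in Hclose.
  change (scal (2 * PI - 0) (Re (f z0))) with ((2 * PI - 0) * Re (f z0)) in Hclose.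
  rewrite Rminus_0_r in Hclose; rewrite (Rmult_comm eps); apply Hclose.
  intros t _; replace (Re (f (polar z0 r' t)) - Re (f z0)) with (Re (f (polar z0 r' t) - f z0))
    by (unfold Re; simpl; ring).
  eapply Rle_trans; [apply re_le_Cmod | apply Hcont].
  rewrite Cmod_polar_center, Rabs_pos_eq; lra.
Qed.

End MeanValue.

(** * The minimum principle for the real part *)

Lemma RInt_nonneg_eq0 (g : R -> R) a b : a < b ->
  (forall t, a <= t <= b -> continuous g t) -> (forall t, a <= t <= b -> 0 <= g t) ->
  RInt g a b = 0 -> forall t, a <= t <= b -> g t = 0.
Proof.
  intros Hab Hc Hp HI t0 Ht0.
  destruct (Rle_lt_or_eq_dec 0 (g t0) (Hp t0 Ht0)) as [Hg|]; [exfalso | congruence].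
  destruct (proj2 (continuity_pt_filterlim g t0) (Hc t0 Ht0) (g t0 / 2) ltac:(lra))
    as [eta [Heta Hnear]].
  assert (Hex : forall u v, a <= u <= v -> v <= b -> ex_RInt g u v).
  { intros u v Huv Hv; apply (@ex_RInt_continuous R_CompleteNormedModule); intros t Ht.
    rewrite Rmin_left, Rmax_right in Ht by lra; apply Hc; lra. }
  set (al := Rmax a (t0 - eta / 2)); set (be := Rmin b (t0 + eta / 2)).
  assert (Hal : a <= al <= t0 /\ t0 - eta / 2 <= al)
    by (unfold al; repeat split; [apply Rmax_l | apply Rmax_lub; lra | apply Rmax_r]).
  assert (Hbe : t0 <= be <= b /\ be <= t0 + eta / 2)
    by (unfold be; repeat split; [apply Rmin_glb; lra | apply Rmin_l | apply Rmin_r]).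
  assert (Hlen : al < be).
  { unfold al, be; apply Rmax_lub_lt; apply Rmin_glb_lt; lra. }
  assert (Hmid : (be - al) * (g t0 / 2) <= RInt g al be).
  { assert (Hconst := RInt_const al be (g t0 / 2)).
    change (scal (be - al) (g t0 / 2)) with ((be - al) * (g t0 / 2)) in Hconst.
    rewrite <- Hconst.
    apply RInt_le; [lra | apply ex_RInt_const | apply Hex; lra |]; intros t Ht.
    destruct (Req_dec t t0) as [->|Hne]; [lra|].
    assert (Hd : R_dist t t0 < eta) by (apply Rabs_lt_between'; lra).
    specialize (Hnear t (conj (conj I (not_eq_sym Hne)) Hd)); simpl in Hnear.
    unfold R_dist in Hnear; apply Rabs_lt_between' in Hnear; lra. }
  assert (0 <= RInt g a al) by (apply RInt_ge_0; [lra | apply Hex; lra | intros; apply Hp; lra]).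
  assert (0 <= RInt g be b) by (apply RInt_ge_0; [lra | apply Hex; lra | intros; apply Hp; lra]).
  rewrite <- (RInt_Chasles g a al b), <- (RInt_Chasles g al be b) in HI by (apply Hex; lra).
  unfold plus in HI; simpl in HI.
  assert (0 < (be - al) * (g t0 / 2)) by (apply Rmult_lt_0_compat; lra).
  lra.
Qed.

Section DiscMinimum.

Variables (f : C -> C) (z0 : C) (R0 : R).
Hypothesis hol : forall w, Cmod (w - z0) < R0 -> C_differentiable f w.
Hypothesis Re_nonneg : forall w, Cmod (w - z0) < R0 -> 0 <= Re (f w).

Lemma disc_Re_min_eq0 : Re (f z0) = 0 -> forall w, Cmod (w - z0) < R0 -> Re (f w) = 0.
Proof.
  intros H0 w Hw; pose proof PI_RGT_0.
  destruct (Ceq_dec w z0) as [->|Hne]; [exact H0|].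
  destruct (polar_surjective z0 w Hne) as [t [Ht Hpolar]].
  assert (Hr : 0 < Cmod (w - z0)).
  { apply Cmod_gt_0; intros E; apply Hne.
    replace w with ((w - z0) + z0)%C by ring; rewrite E; ring. }
  assert (Hmean := mean_value_Re f z0 R0 hol (Cmod (w - z0)) (conj Hr Hw)).
  rewrite H0, Rmult_0_r in Hmean.
  rewrite <- Hpolar.
  apply (RInt_nonneg_eq0 (fun t => Re (f (polar z0 (Cmod (w - z0)) t))) 0 (2 * PI));
    [lra | | | exact Hmean | exact Ht]; intros s _.
  - apply (continuous_arc z0 f), (continuous_annulus f z0 R0 hol); lra.
  - apply Re_nonneg; rewrite Cmod_polar_center, Rabs_pos_eq; lra.
Qed.

End DiscMinimum.

(* [Re (- f^2) = (Im f)^2] wherever [Re f] vanishes. *)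
Lemma disc_min_eq0 (f : C -> C) z0 R0 :
  (forall w, Cmod (w - z0) < R0 -> C_differentiable f w) ->
  (forall w, Cmod (w - z0) < R0 -> 0 <= Re (f w)) ->
  f z0 = RtoC 0 -> forall w, Cmod (w - z0) < R0 -> f w = RtoC 0.
Proof.
  intros hol Re_nonneg H0.
  assert (HRe := disc_Re_min_eq0 f z0 R0 hol Re_nonneg ltac:(rewrite H0; reflexivity)).
  set (g := fun z => (- (f z * f z))%C).
  assert (Hg : forall w, Cmod (w - z0) < R0 -> C_differentiable g w).
  { intros w Hw; destruct (hol w Hw) as [l Hl]; eexists.
    apply (@is_derive_opp C_AbsRing C_NormedModule), is_C_derive_mult; exact Hl. }
  assert (HgRe : forall w, Cmod (w - z0) < R0 -> Re (g w) = Im (f w) ^ 2).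
  { intros w Hw; pose proof (HRe w Hw); unfold g, Re, Im in *; simpl in *; nra. }
  assert (HgRe0 := disc_Re_min_eq0 g z0 R0 Hg
    ltac:(intros w Hw; rewrite HgRe by exact Hw; apply pow2_ge_0)
    ltac:(unfold g; rewrite H0; simpl; ring)).
  intros w Hw; apply injective_projections; simpl; [apply HRe, Hw|].
  specialize (HgRe0 w Hw); rewrite HgRe in HgRe0 by exact Hw.
  destruct (Req_dec (Im (f w)) 0) as [E|E]; [exact E | exfalso; exact (pow_nonzero _ 2 E HgRe0)].
Qed.

Lemma disc_chain_ind (P : C -> Prop) z0 z1 m : 0 < m -> m <= Re z0 -> m <= Re z1 ->
  (forall p q, m <= Re p -> Cmod (q - p) < m -> P p -> P q) -> P z0 -> P z1.
Proof.
  intros Hm Hm0 Hm1 Hstep HP0.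
  set (D := Cmod (z1 - z0)).
  assert (HD : 0 <= D) by apply Cmod_ge_0.
  destruct (archimed_cor1 (m / (D + 1))) as [N [HN HN0]]; [apply Rdiv_lt_0_compat; lra|].
  apply lt_0_INR in HN0.
  set (p := fun k => (z0 + RtoC (INR k / INR N) * (z1 - z0))%C).
  assert (Hp_re : forall k, (k <= N)%nat -> m <= Re (p k)).
  { intros k Hk; apply le_INR in Hk.
    assert (Hs : 0 <= INR k / INR N <= 1).
    { split; [apply Rdiv_le_0_compat; [apply pos_INR | lra]|].
      apply (Rmult_le_reg_r (INR N)); [lra|]; unfold Rdiv; rewrite Rmult_assoc, Rinv_l; lra. }
    unfold p, Re in *; simpl; set (s := INR k / INR N) in *.
    replace (fst z0 + (s * (fst z1 - fst z0) - 0 * (snd z1 - snd z0)))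
      with ((1 - s) * fst z0 + s * fst z1) by ring.
    nra. }
  assert (Hp_step : forall k, Cmod (p (S k) - p k) < m).
  { intros k; unfold p.
    replace (z0 + RtoC (INR (S k) / INR N) * (z1 - z0) - (z0 + RtoC (INR k / INR N) * (z1 - z0)))%C
      with (RtoC (/ INR N) * (z1 - z0))%C
      by (rewrite S_INR; apply injective_projections; simpl; field; lra).
    rewrite Cmod_mult, Cmod_R, Rabs_pos_eq by (left; apply Rinv_0_lt_compat; lra); fold D.
    apply (Rmult_lt_compat_r (D + 1)) in HN; [|lra].
    unfold Rdiv in HN; rewrite Rmult_assoc, Rinv_l, Rmult_1_r in HN by lra.
    pose proof (Rinv_0_lt_compat (INR N) HN0); nra. }
  assert (Hchain : forall k, (k <= N)%nat -> P (p k)).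
  { induction k as [|k IH]; intros Hk.
    - unfold p; simpl; rewrite Rdiv_0_l.
      replace (z0 + RtoC 0 * (z1 - z0))%C with z0 by ring; exact HP0.
    - apply (Hstep (p k)); [apply Hp_re; lia | apply Hp_step | apply IH; lia]. }
  replace z1 with (p N) by (unfold p, Rdiv; rewrite Rinv_r by lra;
    apply injective_projections; simpl; ring).
  apply Hchain; lia.
Qed.

Lemma half_plane_min_eq0 (f : C -> C) : holomorphic_on right_half_plane f ->
  (forall w, right_half_plane w -> 0 <= Re (f w)) ->
  forall z0 z1, right_half_plane z0 -> right_half_plane z1 ->
  f z0 = RtoC 0 -> f z1 = RtoC 0.
Proof.
  unfold right_half_plane; intros hol Re_nonneg z0 z1 H0 H1.
  set (m := Rmin (Re z0) (Re z1)).
  apply (disc_chain_ind (fun z => f z = RtoC 0) z0 z1 m);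
    [apply Rmin_pos; assumption | apply Rmin_l | apply Rmin_r |].
  intros p q Hp Hq Hfp.
  assert (Hdisc : forall w, Cmod (w - p) < m -> 0 < Re w)
    by (intros w Hw; apply (Re_pos_of_Cmod_lt p); lra).
  apply (disc_min_eq0 f p m); auto.
Qed.

Fixpoint root_prod (s : list C) (z : C) : C :=
  match s with nil => RtoC 1 | cons r s => ((z - r) * root_prod s z)%C end.

Module ComplexPolynomial.

Import ssreflect ssrfun ssrbool eqtype ssrnat seq fintype bigop ssralg poly Rstruct complex.
Import GRing.Theory.
Local Open Scope ring_scope.

Definition Ri_of_C (z : C) : R[i] := Complex (fst z) (snd z).
Definition C_of_Ri (x : R[i]) : C := (complex.Re x, complex.Im x).

Lemma Ri_of_CK : cancel Ri_of_C C_of_Ri. Proof. by case. Qed.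
Lemma C_of_RiK : cancel C_of_Ri Ri_of_C. Proof. by case. Qed.

Lemma Ri_of_C_add a b : Ri_of_C (Cplus a b) = Ri_of_C a + Ri_of_C b. Proof. by []. Qed.
Lemma Ri_of_C_mul a b : Ri_of_C (Cmult a b) = Ri_of_C a * Ri_of_C b. Proof. by []. Qed.

Lemma Ri_of_C_Cpow z n : Ri_of_C (Cpow z n) = Ri_of_C z ^+ n.
Proof. by elim: n => [|n IH] //=; rewrite Ri_of_C_mul IH exprS. Qed.

Lemma Ri_of_C_pow_n (z : C) n : Ri_of_C (@pow_n C_Ring z n) = Ri_of_C z ^+ n.
Proof. by elim: n => [|n IH] //=; rewrite exprS -IH. Qed.

Lemma Ri_of_C_root_prod s z : Ri_of_C (root_prod s z) = \prod_(x <- map Ri_of_C s) (Ri_of_C z - x).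
Proof. by elim: s => [|r s IH] /=; rewrite ?big_nil ?big_cons ?Ri_of_C_mul ?IH. Qed.

Lemma Ri_of_C_sum_n (a : nat -> C) z n :
  Ri_of_C (@sum_n C_Ring (fun k => mult (a k) (pow_n z k)) n) =
  \sum_(i < n.+1) Ri_of_C (a i) * Ri_of_C z ^+ i.
Proof.
  elim: n => [|n IH]; first by rewrite sum_O big_ord1 /= -Ri_of_C_pow_n.
  rewrite sum_Sn big_ord_recr /= -IH [Ri_of_C (plus _ _)]Ri_of_C_add.
  by rewrite [Ri_of_C (mult _ _)]Ri_of_C_mul -Ri_of_C_pow_n.
Qed.

Lemma C_polynomial_factor (P : C -> C) : is_C_polynomial P ->
  exists (lc : C) (s : list C), forall z, P z = Cmult lc (root_prod s z).
Proof.
  move=> [n [a Ha]].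
  set p := \poly_(i < n.+1) Ri_of_C (a i).
  have [rs Hrs] := closed_field_poly_normal p.
  exists (C_of_Ri (lead_coef p)), (map C_of_Ri rs) => z.
  have Hp : Ri_of_C (P z) = p.[Ri_of_C z] by rewrite Ha Ri_of_C_sum_n horner_poly.
  apply: (can_inj Ri_of_CK).
  rewrite Hp Ri_of_C_mul C_of_RiK Ri_of_C_root_prod -map_comp (eq_map C_of_RiK) map_id.
  rewrite {1}Hrs hornerZ horner_prod.
  by congr (_ * _); apply: eq_bigr => x _; rewrite hornerXsubC.
Qed.

Lemma Cpow_surjective (c : C) (m : nat) : (0 < m)%coq_nat -> exists d, Cpow d m = c.
Proof.
  move=> /ltP Hm.
  have : size ('X^m - (Ri_of_C c)%:P) != 1%N by rewrite size_XnsubC //; case: m Hm.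
  move/closed_rootP => [x Hx]; exists (C_of_Ri x); apply: (can_inj Ri_of_CK).
  rewrite Ri_of_C_Cpow C_of_RiK; apply/eqP; rewrite -subr_eq0.
  by move: Hx; rewrite /root !hornerE.
Qed.

End ComplexPolynomial.

Import ComplexPolynomial.

Fixpoint root_prod_deriv (s : list C) (z : C) : C :=
  match s with
  | nil => RtoC 0
  | cons r s => (root_prod s z + (z - r) * root_prod_deriv s z)%C
  end.

Lemma is_C_derive_root_prod s z : is_C_derive (root_prod s) z (root_prod_deriv s z).
Proof.
  induction s as [|r s IH]; simpl; [apply is_C_derive_const|].
  assert (H := is_C_derive_mult _ _ z _ _ (is_C_derive_sub_const r z) IH).
  replace (root_prod s z + (z - r) * root_prod_deriv s z)%C
    with (RtoC 1 * root_prod s z + (z - r) * root_prod_deriv s z)%C by ring.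
  exact H.
Qed.

Lemma is_C_derive_scaled_root_prod lc s z :
  is_C_derive (fun w => lc * root_prod s w)%C z (lc * root_prod_deriv s z)%C.
Proof.
  assert (H := is_C_derive_mult _ _ z _ _ (is_C_derive_const lc z) (is_C_derive_root_prod s z)).
  replace (lc * root_prod_deriv s z)%C
    with (RtoC 0 * root_prod s z + lc * root_prod_deriv s z)%C by ring.
  exact H.
Qed.

Lemma root_prod_neq0 s z : ~ In z s -> root_prod s z <> RtoC 0.
Proof.
  induction s as [|r s IH]; simpl; intros Hz.
  - intros E; injection E; lra.
  - apply Cmult_neq_0; [|apply IH; tauto].
    intros E; apply Hz; left.
    replace r with (z - (z - r))%C by ring; rewrite E; ring.
Qed.

Lemma root_prod_split r s z :
  root_prod s z = ((z - r) ^ count_occ Ceq_dec s r * root_prod (remove Ceq_dec r s) z)%C.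
Proof.
  induction s as [|x s IH]; simpl; [ring|].
  destruct (Ceq_dec x r) as [->|Hne]; simpl; rewrite IH;
    [destruct (Ceq_dec r r); [ring | contradiction] |].
  destruct (Ceq_dec r x); [congruence | simpl; ring].
Qed.

Lemma Re_root_prod_deriv_conj_cons r s z :
  Re (root_prod_deriv (r :: s) z * Cconj (root_prod (r :: s) z))%C =
  Cmod (root_prod s z) ^ 2 * (Re z - Re r)
  + Cmod (z - r)%C ^ 2 * Re (root_prod_deriv s z * Cconj (root_prod s z))%C.
Proof. rewrite !Cmod2_alt; unfold Re, Im; simpl; ring. Qed.

Lemma Re_root_prod_deriv_conj_nonneg s z : (forall r, In r s -> Re r <= 0) -> 0 < Re z ->
  0 <= Re (root_prod_deriv s z * Cconj (root_prod s z))%C.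
Proof.
  induction s as [|r s IH]; intros Hs Hz; [unfold Re; simpl; lra|].
  rewrite Re_root_prod_deriv_conj_cons.
  pose proof (Hs r (in_eq r s)); pose proof (IH (fun x Hx => Hs x (in_cons r x s Hx)) Hz).
  pose proof (pow2_ge_0 (Cmod (root_prod s z))); pose proof (pow2_ge_0 (Cmod (z - r))).
  apply Rplus_le_le_0_compat; apply Rmult_le_pos; lra.
Qed.

Lemma Re_root_prod_deriv_conj_pos s z : (forall r, In r s -> Re r <= 0) -> 0 < Re z ->
  s <> nil -> 0 < Re (root_prod_deriv s z * Cconj (root_prod s z))%C.
Proof.
  destruct s as [|r s]; intros Hs Hz Hnil; [contradiction|].
  rewrite Re_root_prod_deriv_conj_cons.
  assert (Hroots : forall x, In x s -> Re x <= 0) by (intros x Hx; apply Hs, in_cons, Hx).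
  assert (HP : root_prod s z <> RtoC 0).
  { apply root_prod_neq0; intros Hin; specialize (Hroots z Hin); lra. }
  apply Cmod_gt_0 in HP; pose proof (Hs r (in_eq r s)).
  pose proof (Re_root_prod_deriv_conj_nonneg s z Hroots Hz).
  pose proof (pow2_ge_0 (Cmod (z - r))).
  apply Rplus_lt_le_0_compat; [apply Rmult_lt_0_compat; [apply pow_lt|] | apply Rmult_le_pos];
    lra.
Qed.

Lemma right_half_plane_1 : right_half_plane (RtoC 1).
Proof. unfold right_half_plane, Re; simpl; lra. Qed.

Section Lemma2p2.

Variables Q0 Q1 : C -> C.
Hypothesis hQ0 : holomorphic_on right_half_plane Q0.
Hypothesis hnz : forall v w : C, right_half_plane v -> right_half_plane w ->
  Cplus (Q0 w) (Cmult v (Q1 w)) <> RtoC 0.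

(* Otherwise [v := - Q0 w / Q1 w] lies in the half-plane and [Q0 w + v Q1 w = 0]. *)
Lemma Re_Q0_conj_Q1_nonneg w : right_half_plane w -> 0 <= Re (Q0 w * Cconj (Q1 w))%C.
Proof.
  intros Hw; apply Rnot_lt_le; intros Hneg.
  assert (HQ1 : Q1 w <> RtoC 0)
    by (intros E; rewrite E in Hneg; unfold Re in Hneg; simpl in Hneg; lra).
  apply (hnz (- Q0 w / Q1 w)%C w); [| exact Hw | field; exact HQ1].
  unfold right_half_plane; rewrite Re_div by exact HQ1.
  replace (- Q0 w * Cconj (Q1 w))%C with (- (Q0 w * Cconj (Q1 w)))%C by ring.
  apply Rdiv_lt_0_compat; [unfold Re in *; simpl in *; lra|].
  apply pow_lt, Cmod_gt_0, HQ1.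
Qed.

(* Near a root [r] of order [m], [Q1 (r + t d) = t^m d^m q (r + t d)]; choosing
   [d^m = - Q0 r / q r] makes [Re (Q0 conj Q1)] negative for small [t > 0]. *)
Lemma Q1_no_root_in_half_plane r m (q : C -> C) : 0 < Re r -> (0 < m)%nat ->
  Ccontinuous q r -> q r <> RtoC 0 -> (forall z, Q1 z = ((z - r) ^ m * q z)%C) -> False.
Proof.
  intros Hr Hm Hq Hqr HQ1.
  assert (HQ0r : Q0 r <> RtoC 0).
  { intros E; apply (hnz (RtoC 1) r right_half_plane_1 Hr).
    rewrite HQ1, E; destruct m as [|m]; [lia | simpl; ring]. }
  set (c := (- Q0 r / q r)%C).
  destruct (Cpow_surjective c m Hm) as [d Hd].
  set (h := fun w => (Q0 w * Cconj (c * q w))%C).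
  assert (Hh : Ccontinuous h r).
  { apply Ccontinuous_mult; [apply C_differentiable_continuous, hQ0, Hr|].
    apply Ccontinuous_conj, Ccontinuous_mult; [apply Ccontinuous_const | exact Hq]. }
  assert (Hhr : Re (h r) < 0).
  { unfold h, c; replace (- Q0 r / q r * q r)%C with (- Q0 r)%C by (field; exact Hqr).
    apply Cmod_gt_0 in HQ0r; pose proof (pow_lt _ 2 HQ0r) as Hsq.
    rewrite Cmod2_alt in Hsq; unfold Re, Im in *; simpl; lra. }
  destruct (Ccontinuous_Re_neg h r Hh Hhr) as [delta [Hdelta Hneg]].
  destruct (exists_small_multiple d (Rmin delta (Re r))) as [t [Ht Htd]];
    [apply Rmin_pos; lra|].
  set (w := (r + RtoC t * d)%C).
  assert (Hwr : (w - r)%C = (RtoC t * d)%C) by (unfold w; ring).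
  assert (Hw : right_half_plane w).
  { apply (Re_pos_of_Cmod_lt r); rewrite Hwr; eapply Rlt_le_trans; [exact Htd | apply Rmin_r]. }
  assert (HQ1w : (Q0 w * Cconj (Q1 w))%C = (RtoC (t ^ m) * h w)%C).
  { rewrite HQ1, Hwr, Cpow_mult_l, Hd, <- RtoC_pow; unfold h; rewrite !Cmult_conj.
    replace (Cconj (RtoC (t ^ m))) with (RtoC (t ^ m))
      by (unfold Cconj, RtoC; simpl; f_equal; ring).
    ring. }
  pose proof (Re_Q0_conj_Q1_nonneg w Hw) as Hnonneg; rewrite HQ1w in Hnonneg.
  replace (Re (RtoC (t ^ m) * h w)) with (t ^ m * Re (h w)) in Hnonneg
    by (unfold Re; simpl; ring).
  assert (Hhw : Re (h w) < 0).
  { apply Hneg; rewrite Hwr; eapply Rlt_le_trans; [exact Htd | apply Rmin_l]. }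
  pose proof (pow_lt t m Ht); nra.
Qed.

Lemma Q1_roots_Re_nonpos lc s : lc <> RtoC 0 ->
  (forall z, Q1 z = (lc * root_prod s z)%C) -> forall r, In r s -> Re r <= 0.
Proof.
  intros Hlc HQ1 r Hin; apply Rnot_lt_le; intros Hr.
  apply (Q1_no_root_in_half_plane r (count_occ Ceq_dec s r)
    (fun z => lc * root_prod (remove Ceq_dec r s) z)%C Hr).
  - apply count_occ_In, Hin.
  - apply C_differentiable_continuous; eexists; apply is_C_derive_scaled_root_prod.
  - apply Cmult_neq_0; [exact Hlc | apply root_prod_neq0, remove_In].
  - intros z; rewrite HQ1, (root_prod_split r s z); ring.
Qed.

Lemma Q0_zero_or_nonvanishing lc : lc <> RtoC 0 -> (forall z, Q1 z = lc) ->
  (forall z, right_half_plane z -> Q0 z <> RtoC 0) \/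
  (forall z, right_half_plane z -> Q0 z = RtoC 0).
Proof.
  intros Hlc HQ1.
  destruct (classic (exists z0, right_half_plane z0 /\ Q0 z0 = RtoC 0)) as [[z0 [Hz0 Hzero]]|Hno];
    [right | left; intros z Hz E; apply Hno; exists z; auto].
  set (g := fun w => (Q0 w * Cconj lc)%C).
  assert (Hg : holomorphic_on right_half_plane g).
  { intros w Hw; destruct (hQ0 w Hw) as [l Hl]; eexists.
    exact (is_C_derive_mult _ _ w _ _ Hl (is_C_derive_const (Cconj lc) w)). }
  assert (Hg_Re : forall w, right_half_plane w -> 0 <= Re (g w)).
  { intros w Hw; unfold g; rewrite <- (HQ1 w); apply Re_Q0_conj_Q1_nonneg, Hw. }
  assert (Hclc : Cconj lc <> RtoC 0)
    by (intros E; apply Hlc; rewrite <- (Cconj_conj lc), E;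
        apply injective_projections; simpl; ring).
  intros z Hz.
  assert (Hgz := half_plane_min_eq0 g Hg Hg_Re z0 z Hz0 Hz
    ltac:(unfold g; rewrite Hzero; ring)).
  replace (Q0 z) with (g z / Cconj lc)%C by (unfold g; field; exact Hclc).
  rewrite Hgz; field; exact Hclc.
Qed.

Lemma S_neq0_of_roots_Re_nonpos lc s z : lc <> RtoC 0 -> s <> nil ->
  (forall z, Q1 z = (lc * root_prod s z)%C) -> (forall r, In r s -> Re r <= 0) ->
  right_half_plane z -> (Q0 z + lc * root_prod_deriv s z)%C <> RtoC 0.
Proof.
  intros Hlc Hs HQ1 Hroots Hz E.
  assert (Hsum : Re ((Q0 z + lc * root_prod_deriv s z) * Cconj (Q1 z))%C
    = Re (Q0 z * Cconj (Q1 z))%C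
      + Re (root_prod_deriv s z * Cconj (root_prod s z))%C * Cmod lc ^ 2)
    by (rewrite HQ1, Cmult_conj, Cmod2_alt; unfold Re, Im; simpl; ring).
  rewrite E, Cmult_0_l in Hsum; change (Re (RtoC 0)) with 0 in Hsum.
  pose proof (Re_Q0_conj_Q1_nonneg z Hz).
  pose proof (Re_root_prod_deriv_conj_pos s z Hroots Hz Hs).
  apply Cmod_gt_0 in Hlc; pose proof (pow_lt _ 2 Hlc); nra.
Qed.

End Lemma2p2.

Lemma C_derive_scaled_root_prod (P : C -> C) lc s :
  (forall z, P z = (lc * root_prod s z)%C) ->
  forall z, C_derive P z = (lc * root_prod_deriv s z)%C.
Proof.
  intros HP z; apply is_C_derive_unique.
  apply (is_derive_ext (fun w => lc * root_prod s w)%C); [intros w; symmetry; apply HP|].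
  apply is_C_derive_scaled_root_prod.
Qed.

Theorem lemma2p2 (Q0 Q1 : C -> C)
  (hQ0 : holomorphic_on right_half_plane Q0)
  (hQ1 : is_C_polynomial Q1)
  (hnz : forall v w : C, right_half_plane v -> right_half_plane w ->
           Cplus (Q0 w) (Cmult v (Q1 w)) <> 0%C) :
  let S := fun z : C => Cplus (Q0 z) (C_derive Q1 z) in
  (forall z : C, right_half_plane z -> S z <> 0%C) \/
  (forall z : C, right_half_plane z -> S z = 0%C).
Proof.
  intros S.
  destruct (C_polynomial_factor Q1 hQ1) as [lc [s HQ1]].
  assert (HS : forall z, S z = (Q0 z + lc * root_prod_deriv s z)%C)
    by (intros z; unfold S; rewrite (C_derive_scaled_root_prod Q1 lc s HQ1); reflexivity).
  destruct (Ceq_dec lc 0) as [Hlc|Hlc].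
  - left; intros z Hz; rewrite HS.
    replace (Q0 z + lc * root_prod_deriv s z)%C with (Q0 z + RtoC 1 * Q1 z)%C
      by (rewrite HQ1, Hlc; ring).
    apply hnz; [apply right_half_plane_1 | exact Hz].
  - destruct s as [|r s].
    + assert (HQ1c : forall z, Q1 z = lc) by (intros z; rewrite HQ1; simpl; ring).
      destruct (Q0_zero_or_nonvanishing Q0 Q1 hQ0 hnz lc Hlc HQ1c) as [H|H];
        [left | right]; intros z Hz; rewrite HS; simpl;
        replace (Q0 z + lc * RtoC 0)%C with (Q0 z) by ring; auto.
    + left; intros z Hz; rewrite HS.
      apply (S_neq0_of_roots_Re_nonpos Q0 Q1 hnz lc (r :: s)); try assumption; [discriminate|].
      apply (Q1_roots_Re_nonpos Q0 Q1 hQ0 hnz lc); assumption.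
Qed.
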